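(* Let $p\in\mathbb{N}$ and let $C_1,\dots,C_p$ be bivariate copulas satisfying the standing assumption, and set $C_k=C^\perp$ (the independence copula $C^\perp(u,v)=uv$) for $k>p$. Then for all $k>p$ and $(\mathbf{u},x)\in(0,1)^k\times(0,1)$, the forward Rosenblatt functions satisfy $R_k(\mathbf{u},x)=R_p(\mathbf{u}_{[k-p+1,k]},x)$. Consequently, if $(Z_k)_{k\in\mathbb{N}}$ are iid standard uniform, $U_1=Z_1$ and $U_k=R_{k-1}^{-1}((U_1,\dots,U_{k-1})^\top,Z_k)$ for $k\ge2$, then $U_k=R_p^{-1}((U_{k-p},\dots,U_{k-1})^\top,Z_k)$ for all $k>p$.
   Context: Standing assumption: each $C_k$ is $C^\infty$ on $(0,1)^2$ with density strictly positive on $(0,1)^2$. Write $h_k^{(1)}=\partial C_k/\partial u_1$, $h_k^{(2)}=\partial C_k/\partial u_2$; for $\mathbf{u}=(u_1,\dots,u_k)^\top$, $\mathbf{u}_{-i}$ is $\mathbf{u}$ without its $i$th component and $\mathbf{u}_{[a,b]}=(u_a,\dots,u_b)^\top$. Rosenblatt functions: $R^{(1)}_1(u,x)=h_1^{(1)}(u,x)$, $R^{(2)}_1(u,x)=h_1^{(2)}(x,u)$, and for $k\ge2$ $R^{(1)}_k(\mathbf{u},x)=h_k^{(1)}(R^{(2)}_{k-1}(\mathbf{u}_{-1},u_1),R^{(1)}_{k-1}(\mathbf{u}_{-1},x))$, $R^{(2)}_k(\mathbf{u},x)=h_k^{(2)}(R^{(2)}_{k-1}(\mathbf{u}_{-k},x),R^{(1)}_{k-1}(\mathbf{u}_{-k},u_k))$.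 $R_k:=R^{(1)}_k$, and $R_k^{-1}(\mathbf{u},\cdot)$ is the inverse of the bijection $x\mapsto R_k(\mathbf{u},x)$ of $(0,1)$. *)

From Stdlib Require Import Reals List ClassicalEpsilon.
From Coquelicot Require Import Coquelicot.
Open Scope R_scope.

(** Bivariate copula (values only matter on [0,1]^2). *)
Definition is_copula (C : R -> R -> R) : Prop :=
  (forall u, 0 <= u <= 1 ->
     C u 0 = 0 /\ C 0 u = 0 /\ C u 1 = u /\ C 1 u = u) /\
  (forall u1 u2 v1 v2, 0 <= u1 -> u1 <= u2 -> u2 <= 1 ->
     0 <= v1 -> v1 <= v2 -> v2 <= 1 ->
     C u2 v2 - C u2 v1 - C u1 v2 + C u1 v1 >= 0).

Definition indep_copula : R -> R -> R := fun u v => u * v.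

(** Iterated partial derivatives: [true] = d/du (first argument),
    [false] = d/dv (second argument); the head of the list is applied last. *)
Fixpoint dpart (l : list bool) (f : R -> R -> R) : R -> R -> R :=
  match l with
  | nil => f
  | b :: l' =>
      let g := dpart l' f in
      if b then (fun u v => Derive (fun t => g t v) u)
      else (fun u v => Derive (fun t => g u t) v)
  end.

Definition smooth_open_square (f : R -> R -> R) : Prop :=
  forall (l : list bool) (u v : R), 0 < u < 1 -> 0 < v < 1 ->
    ex_derive (fun t => dpart l f t v) u /\
    ex_derive (fun t => dpart l f u t) v /\
    continuous (fun p : R * R => dpart l f (fst p) (snd p)) (u, v).

Definition copula_density (C : R -> R -> R) : R -> R -> R :=
  dpart (true :: false :: nil) C.

Definition standing_assumption (C : R -> R -> R) : Prop :=
  smooth_open_square C /\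
  (forall u v, 0 < u < 1 -> 0 < v < 1 -> copula_density C u v > 0).

Definition h1 (C : R -> R -> R) (u v : R) : R := Derive (fun t => C t v) u.
Definition h2 (C : R -> R -> R) (u v : R) : R := Derive (fun t => C u t) v.

(** Rosenblatt functions (R^(1)_k, R^(2)_k) for the family Cs (indexed from 1;
    Cs 0 is unused); vectors u in (0,1)^k are lists of length k.
    Convention R^(1)_0(.,x) = R^(2)_0(.,x) = x, with which the k=1 step
    gives exactly R^(1)_1(u,x)=h_1^(1)(u,x), R^(2)_1(u,x)=h_1^(2)(x,u). *)
Fixpoint Ros (Cs : nat -> R -> R -> R) (k : nat)
  : (list R -> R -> R) * (list R -> R -> R) :=
  match k with
  | O => (fun _ x => x, fun _ x => x)
  | S k' =>
      let R1 := fst (Ros Cs k') in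
      let R2 := snd (Ros Cs k') in
      (fun u x => h1 (Cs (S k')) (R2 (tl u) (hd 0 u)) (R1 (tl u) x),
       fun u x => h2 (Cs (S k')) (R2 (removelast u) x)
                                 (R1 (removelast u) (last u 0)))
  end.

Definition RosF (Cs : nat -> R -> R -> R) (k : nat) : list R -> R -> R :=
  fst (Ros Cs k).

Definition RosInv (Cs : nat -> R -> R -> R) (k : nat) (u : list R) (z : R) : R :=
  epsilon (inhabits 0) (fun y => 0 < y < 1 /\ RosF Cs k u y = z).

Definition in_unit_open (x : R) : Prop := 0 < x < 1.

(** Idea: the h-function of the independence copula C(u,v) = uv is the
    projection h^(1)(a,b) = b.  Hence whenever C_{k+1} is the independence
    copula, the recursion defining R^(1)_{k+1} collapses to
    R_{k+1}(u,x) = R_k(tail u, x): the first coordinate of u is forgotten.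
    Iterating this from k = p upwards gives R_{p+n}(u,x) = R_p(skipn n u, x),
    which is the first claim.  Since R_k^{-1} is defined from R_k alone, the
    same identity holds for the inverses, and the second claim follows by
    observing that dropping the first k-1-p entries of (U_1,...,U_{k-1})
    leaves exactly the window (U_{k-p},...,U_{k-1}); the degenerate case
    k = 1 (p = 0) uses that R_0 is the identity, so R_0^{-1}(., z) = z. *)
From Stdlib Require Import Reals List Lia ClassicalEpsilon FunctionalExtensionality.
From Coquelicot Require Import Coquelicot.
Open Scope R_scope.

Lemma h1_indep (a b : R) : h1 indep_copula a b = b.
Proof.
  unfold h1, indep_copula. apply is_derive_unique.
  auto_derive; [exact I | ring].
Qed.

Lemma RosF_succ_indep (Cs : nat -> R -> R -> R) (k : nat) (u : list R) (x : R) :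
  Cs (S k) = indep_copula -> RosF Cs (S k) u x = RosF Cs k (tl u) x.
Proof.
  intros Hk. unfold RosF; simpl. rewrite Hk. apply h1_indep.
Qed.

Lemma RosF_shift (p : nat) (Cs : nat -> R -> R -> R)
  (Hind : forall k, (p < k)%nat -> Cs k = indep_copula) :
  forall (n : nat) (u : list R) (x : R),
    RosF Cs (p + n) u x = RosF Cs p (skipn n u) x.
Proof.
  induction n as [|n IH]; intros u x.
  - now rewrite Nat.add_0_r.
  - rewrite Nat.add_succ_r, RosF_succ_indep by (apply Hind; lia).
    rewrite IH.
    destruct u as [|a u]; [now destruct n | reflexivity].
Qed.

Lemma RosInv_shift (p : nat) (Cs : nat -> R -> R -> R)
  (Hind : forall k, (p < k)%nat -> Cs k = indep_copula)
  (n : nat) (u : list R) (z : R) :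
  RosInv Cs (p + n) u z = RosInv Cs p (skipn n u) z.
Proof.
  unfold RosInv.
  replace (RosF Cs (p + n) u) with (RosF Cs p (skipn n u)); [reflexivity |].
  apply functional_extensionality; intro y. symmetry. apply RosF_shift, Hind.
Qed.

Lemma RosInv_0 (Cs : nat -> R -> R -> R) (u : list R) (z : R) :
  in_unit_open z -> RosInv Cs 0 u z = z.
Proof.
  intros Hz. unfold RosInv.
  destruct (epsilon_spec (inhabits 0) (fun y => 0 < y < 1 /\ RosF Cs 0 u y = z))
    as [_ E]; [now exists z |].
  exact E.
Qed.

Lemma skipn_history (U : nat -> R) (p k : nat) :
  (p < k)%nat ->
  skipn (k - 1 - p) (map U (seq 1 (k - 1))) = map U (seq (k - p) p).
Proof.
  intros Hk. rewrite skipn_map, skipn_seq.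
  f_equal. f_equal; lia.
Qed.

Theorem mainTheorem4 (p : nat) (Cs : nat -> R -> R -> R)
  (Hcop : forall k, (1 <= k <= p)%nat -> is_copula (Cs k) /\ standing_assumption (Cs k))
  (Hind : forall k, (p < k)%nat -> Cs k = indep_copula) :
  (forall (k : nat) (u : list R) (x : R), (p < k)%nat ->
     length u = k -> List.Forall in_unit_open u -> in_unit_open x ->
     RosF Cs k u x = RosF Cs p (skipn (k - p) u) x) /\
  (forall (Z U : nat -> R),
     (forall k, (1 <= k)%nat -> in_unit_open (Z k)) ->
     U 1%nat = Z 1%nat ->
     (forall k, (2 <= k)%nat ->
        U k = RosInv Cs (k - 1) (map U (seq 1 (k - 1))) (Z k)) ->
     forall k, (p < k)%nat ->
        U k = RosInv Cs p (map U (seq (k - p) p)) (Z k)).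
Proof.
  split.
  - intros k u x Hk _ _ _.
    replace k with (p + (k - p))%nat at 1 by lia.
    apply RosF_shift, Hind.
  - intros Z U HZ HU1 HU k Hk.
    destruct (Nat.eq_dec k 1) as [-> | Hk1].
    + (* k = 1 forces p = 0, and R_0^{-1} is the identity *)
      replace p with 0%nat by lia.
      rewrite HU1, RosInv_0; [reflexivity | apply HZ; lia].
    + rewrite HU by lia.
      replace (k - 1)%nat with (p + (k - 1 - p))%nat at 1 by lia.
      rewrite RosInv_shift, skipn_history by assumption.
      reflexivity.
Qed.
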